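(* Let $G$ be a simple, undirected, unweighted, locally finite graph and $i\sim j$ an edge with $d_i\le d_j$. Suppose $\mathrm{Ric}(i,j)\le -2+\delta$ for some $0<\delta<(1+\gamma_{\max}(i,j))^{-1}$. Then $$\frac{|Q_j|}{|\sharp_\Delta|+1}>\delta^{-1}.$$
   Context: For an edge $i\sim j$ with degrees $d_i,d_j$ and neighbour sets $S_1(\cdot)$: $\sharp_\Delta=S_1(i)\cap S_1(j)$; $\sharp_\square^i=\{k\in S_1(i)\setminus (S_1(j)\cup\{j\}) : \exists\, w\in (S_1(k)\cap S_1(j))\setminus (S_1(i)\cup\{i\})\}$, $\sharp_\square^j$ symmetric; $\gamma_{\max}=\max\big\{\max_{k\in\sharp_\square^i}|(S_1(k)\cap S_1(j))\setminus(S_1(i)\cup\{i\})|,\ \max_{w\in\sharp_\square^j}|(S_1(w)\cap S_1(i))\setminus(S_1(j)\cup\{j\})|\big\}$, with the convention $\gamma_{\max}=0$ when $\sharp_\square^i=\emptyset$. $Q_j=S_1(j)\setminus(\{i\}\cup\sharp_\Delta\cup\sharp_\square^j)$. Balanced Forman curvature: $\mathrm{Ric}(i,j)=0$ if $\min\{d_i,d_j\}=1$, otherwise $\mathrm{Ric}(i,j)=\frac{2}{d_i}+\frac{2}{d_j}-2+\frac{2|\sharp_\Delta|}{\max\{d_i,d_j\}}+\frac{|\sharp_\Delta|}{\min\{d_i,d_j\}}+\frac{\gamma_{\max}^{-1}}{\max\{d_i,d_j\}}(|\sharp_\square^i|+|\sharp_\square^j|)$, the last term being $0$ when $\sharp_\square^i=\emptyset$.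 *)

From mathcomp Require Import all_boot all_order all_algebra.
Set Implicit Arguments. Unset Strict Implicit. Unset Printing Implicit Defensive.
Import Order.TTheory GRing.Theory Num.Theory.
Local Open Scope ring_scope.

(* A locally finite simple undirected graph on a vertex type T (possibly
   infinite) is given by the finite neighbour list N x = S_1(x) of every
   vertex x: duplicate-free, irreflexive (no loops) and symmetric. *)
Definition simple_locfin_graph (T : eqType) (N : T -> seq T) : Prop :=
  [/\ forall x, uniq (N x),
      forall x, x \notin N x &
      forall x y, (y \in N x) = (x \in N y)].

Section Curv.
Variables (T : eqType) (N : T -> seq T).

Definition deg (x : T) : nat := size (N x).

Definition sh_tri (i j : T) : seq T := [seq k <- N i | k \in N j].

Definition sq_wit (i j k : T) : seq T :=
  [seq w <- N k | (w \in N j) && (w \notin N i) && (w != i)].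

Definition sh_sq (i j : T) : seq T :=
  [seq k <- N i | (k \notin N j) && (k != j) && (size (sq_wit i j k) > 0)%N].

(* gamma_max(i,j); the empty max is 0, matching the stated convention *)
Definition gamma_max (i j : T) : nat :=
  maxn (\max_(k <- sh_sq i j) size (sq_wit i j k))
       (\max_(w <- sh_sq j i) size (sq_wit j i w)).

Definition Qj (i j : T) : seq T :=
  [seq w <- N j | (w != i) && (w \notin sh_tri i j) && (w \notin sh_sq j i)].

Definition Ric (R : realFieldType) (i j : T) : R :=
  let di := (deg i)%:R in let dj := (deg j)%:R in
  if (minn (deg i) (deg j) == 1)%N then 0 else
  2 / di + 2 / dj - 2
  + 2 * (size (sh_tri i j))%:R / (maxn (deg i) (deg j))%:R
  + (size (sh_tri i j))%:R / (minn (deg i) (deg j))%:R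
  + (if sh_sq i j is [::] then 0 else
       ((gamma_max i j)%:R)^-1 / (maxn (deg i) (deg j))%:R
       * ((size (sh_sq i j))%:R + (size (sh_sq j i))%:R)).
End Curv.

From mathcomp Require Import all_boot all_order all_algebra.
Import Order.TTheory GRing.Theory Num.Theory.
From mathcomp Require Import zify ring lra.
Set Implicit Arguments.
Unset Strict Implicit.
Unset Printing Implicit Defensive.

(* Since d_i <= d_j, every term 2/d_i, |#_Delta|/d_i of the curvature can be
   traded for the same term over d_j, so Ric(i,j) <= -2 + delta forces
   (4 + 3|#_Delta|)/d_j + |#_square^j| / (gamma_max d_j) <= delta.
   On the other hand S_1(j) is covered by {i}, #_Delta, #_square^j and Q_j,
   so d_j <= |Q_j| + 1 + |#_Delta| + |#_square^j|.  Eliminating d_j and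
   |#_square^j| between these two bounds, using delta (1 + gamma_max) < 1,
   leaves delta |Q_j| > |#_Delta| + 1. *)

Lemma count_mem_leq_size (T : eqType) (s A : seq T) : uniq s ->
  (count (mem A) s <= size A)%N.
Proof.
move=> us; rewrite -size_filter; apply: uniq_leq_size; first exact: filter_uniq.
by move=> x; rewrite mem_filter => /andP[].
Qed.

Lemma uniq_size_leq_count_excl (T : eqType) (s A B : seq T) (a : T) : uniq s ->
  (size s <= count [pred x | (x != a) && (x \notin A) && (x \notin B)] s
             + 1 + size A + size B)%N.
Proof.
move=> us; set p := [pred x | _]; rewrite -(count_predC p s).
have sub_pC : subpred (predC p) (predU (pred1 a) (predU (mem A) (mem B))).
  by move=> x /=; rewrite !negb_and !negbK; case: (x == a) => //=; case: (x \in A).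
have cU (a1 a2 : pred T) : (count (predU a1 a2) s <= count a1 s + count a2 s)%N.
  by rewrite -count_predUI leq_addr.
have ca : (count (pred1 a) s <= 1)%N by rewrite count_uniq_mem // leq_b1.
have := sub_count sub_pC s; have := cU (pred1 a) (predU (mem A) (mem B)).
have := cU (mem A) (mem B); have := @count_mem_leq_size _ s A us.
have := @count_mem_leq_size _ s B us; lia.
Qed.

Section SimpleGraph.
Variables (T : eqType) (N : T -> seq T).

Lemma deg_leq_Qj (i j : T) : uniq (N j) ->
  (deg N j <= size (Qj N i j) + 1 + size (sh_tri N i j) + size (sh_sq N j i))%N.
Proof. by move=> uj; rewrite /deg size_filter; apply: uniq_size_leq_count_excl. Qed.

Lemma gamma_max_gt0 (i j : T) : sh_sq N i j != [::] -> (0 < gamma_max N i j)%N.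
Proof.
case E: (sh_sq N i j) => [|k s] // _.
have kin : k \in sh_sq N i j by rewrite E mem_head.
have := kin; rewrite mem_filter => /andP[/andP[_ sz] _].
by rewrite /gamma_max leq_max (leq_trans sz) // (bigmaxn_sup_seq _ kin).
Qed.

Hypothesis N_sym : forall x y, (y \in N x) = (x \in N y).

(* A witness w of k in #_square^j is itself in #_square^i, witnessed by k. *)
Lemma sh_sq_nil_sym (i j : T) : sh_sq N i j = [::] -> sh_sq N j i = [::].
Proof.
move=> E; case E2: (sh_sq N j i) => [|k s] //.
have : k \in sh_sq N j i by rewrite E2 mem_head.
rewrite mem_filter => /andP[/andP[/andP[kNi kj] sz] kNj].
case E3 : (sq_wit N j i k) sz => [|w s'] // _.
have : w \in sq_wit N j i k by rewrite E3 mem_head.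
rewrite mem_filter => /andP[/andP[/andP[wNi wNj] wj] wNk].
have : k \in sq_wit N i j w by rewrite mem_filter kNj kNi kj -N_sym wNk.
have : w \notin sh_sq N i j by rewrite E.
by rewrite mem_filter wNi wNj wj /=; case: (sq_wit N i j w).
Qed.

End SimpleGraph.

Local Open Scope ring_scope.

Lemma Ric_ge_max_deg (R : realFieldType) (T : eqType) (N : T -> seq T) (i j : T) :
  (deg N i <= deg N j)%N -> (1 < deg N i)%N ->
  -2 + (4 + 3 * (size (sh_tri N i j))%:R) / (deg N j)%:R
  + (if sh_sq N i j is [::] then 0 else
       ((gamma_max N i j)%:R)^-1 / (deg N j)%:R
       * ((size (sh_sq N i j))%:R + (size (sh_sq N j i))%:R))
  <= Ric N R i j.
Proof.
move=> dij di1; rewrite /Ric (minn_idPl dij) (maxn_idPr dij).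
rewrite ifN; last by rewrite neq_ltn di1 orbT.
rewrite lerD2r.
set t : R := (size (sh_tri N i j))%:R.
set di : R := (deg N i)%:R; set dj : R := (deg N j)%:R.
have di_pos : 0 < di by rewrite ltr0n (ltn_trans _ di1).
have inv_le : dj^-1 <= di^-1.
  by rewrite lef_pV2 ?posrE ?ler_nat // ltr0n (leq_trans _ dij) // ltnW.
have := ler_wpM2l (ler0n R 2) inv_le; have := ler_wpM2l (ler0n R (size (sh_tri N i j))) inv_le.
rewrite -/t; rewrite !mulrDl -!mulrA; lra.
Qed.

Lemma curvature_budget (R : realFieldType) (T : eqType) (N : T -> seq T)
    (N_sym : forall x y, (y \in N x) = (x \in N y)) (i j : T) (delta : R) :
  (deg N i <= deg N j)%N -> (1 < deg N i)%N -> Ric N R i j <= -2 + delta ->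
  let t : R := (size (sh_tri N i j))%:R in let dj : R := (deg N j)%:R in
  4 + 3 * t <= delta * dj
  /\ (size (sh_sq N j i))%:R <= (gamma_max N i j)%:R * (delta * dj - 4 - 3 * t).
Proof.
move=> dij di1 HRic t dj; have := @Ric_ge_max_deg R _ _ _ _ dij di1; rewrite -/t -/dj.
have dj_pos : 0 < dj by rewrite ltr0n (leq_trans _ dij) // ltnW.
have t0 : 0 <= t by [].
set si : R := (size (sh_sq N i j))%:R; set sj : R := (size (sh_sq N j i))%:R.
have [Esq|Esq] := eqVneq (sh_sq N i j) [::].
  rewrite Esq => Ric_ge.
  have tri_le : 4 + 3 * t <= delta * dj by rewrite mulrC -ler_pdivrMr //; lra.
  by split=> //; rewrite /sj sh_sq_nil_sym //; apply: mulr_ge0 => //; lra.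
have g_pos : 0 < (gamma_max N i j)%:R :> R by rewrite ltr0n gamma_max_gt0.
set g := (gamma_max N i j)%:R in g_pos *.
case: (sh_sq N i j) Esq => // _ _ _ Ric_ge.
have [si0 sj0] : 0 <= si /\ 0 <= sj by [].
have hx : (4 + 3 * t) / dj + g^-1 / dj * (si + sj) <= delta by lra.
have budget : (4 + 3 * t) * g + (si + sj) <= delta * dj * g.
  have <- : ((4 + 3 * t) / dj + g^-1 / dj * (si + sj)) * (dj * g)
            = (4 + 3 * t) * g + (si + sj) by field; rewrite !lt0r_neq0.
  by rewrite -[delta * dj * g]mulrA ler_pM2r // mulr_gt0.
split; last by lra.
by rewrite -(ler_pM2r g_pos); lra.
Qed.

Lemma ratio_bound_of_budget (R : realFieldType) (delta g t q s d : R) :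
  0 < delta -> delta * (1 + g) < 1 -> 0 <= g -> 0 <= t ->
  d <= q + 1 + t + s -> 4 + 3 * t <= delta * d ->
  s <= g * (delta * d - 4 - 3 * t) -> t + 1 < delta * q.
Proof.
move=> d0 dg g0 t0 hd hX hs.
have h1 : delta * d <= delta * (q + 1 + t + s) by rewrite ler_pM2l.
have h2 : delta * s <= delta * (g * (delta * d - 4 - 3 * t)) by rewrite ler_pM2l.
have h3 : 0 <= (delta * d - 4 - 3 * t) * (1 - delta * g) by apply: mulr_ge0; lra.
nra.
Qed.

Theorem mainTheorem7 (R : realFieldType) (T : eqType) (N : T -> seq T)
  (HG : simple_locfin_graph N) (i j : T) (Hij : j \in N i)
  (Hdeg : (deg N i <= deg N j)%N) (delta : R)
  (Hd0 : 0 < delta) (Hd1 : delta < (1 + (gamma_max N i j)%:R)^-1)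
  (HRic : Ric N R i j <= -2 + delta) :
  (size (Qj N i j))%:R / ((size (sh_tri N i j))%:R + 1) > delta^-1.
Proof.
have [N_uniq _ N_sym] := HG.
have g0 : 0 <= (gamma_max N i j)%:R :> R by [].
have delta_g : delta * (1 + (gamma_max N i j)%:R) < 1.
  by rewrite -ltr_pdivlMr ?mul1r // ltr_wpDr.
have di1 : (1 < deg N i)%N.
  rewrite ltnNge; apply/negP => di_le1; move: HRic; rewrite /Ric (minn_idPl Hdeg).
  have -> : deg N i = 1%N by apply/eqP; rewrite eqn_leq di_le1 /deg; case: (N i) Hij.
  rewrite eqxx; nra.
have [tri_le sq_le] := curvature_budget N_sym Hdeg di1 HRic.
have := deg_leq_Qj i (N_uniq j); rewrite -(ler_nat R) !natrD => deg_le.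
rewrite ltr_pdivlMr ?(ltr_wpDl (ler0n _ _)) // mulrC ltr_pdivrMr // mulrC.
exact: ratio_bound_of_budget Hd0 delta_g g0 (ler0n _ _) deg_le tri_le sq_le.
Qed.
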